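(* Let $X, Y \subset \mathbb{Z}^n$ be finite nonempty sets, let $\kappa$ be an adjacency relation on $\mathbb{Z}^n$ (so that $(X,\kappa)$ and $(Y,\kappa)$ are digital images), and let $d$ be a metric on $\mathbb{Z}^n$. Then $H_d(X,Y) \le \delta_d(X,Y)$.
   Context: A digital image is a pair $(X,\kappa)$ with $X\subset\mathbb{Z}^n$ and $\kappa$ an adjacency (a symmetric irreflexive relation) on its points. A subset is $\kappa$-connected if any two of its points are joined by a finite sequence of points of the subset, consecutive ones $\kappa$-adjacent. A function $f:(X,\kappa)\to(Y,\lambda)$ is $(\kappa,\lambda)$-continuous if it maps $\kappa$-connected subsets to $\lambda$-connected subsets; equivalently, whenever $x,x'$ are $\kappa$-adjacent, $f(x)$ and $f(x')$ are equal or $\lambda$-adjacent. ''$\kappa$-continuous'' means $(\kappa,\kappa)$-continuous. For a metric $d$ and nonempty finite $A,B$, the Hausdorff metric is $H_d(A,B)=\min\{\varepsilon\ge 0 : \forall a\in A\ \exists b'\in B,\ d(a,b')\le\varepsilon, \text{ and } \forall b\in B\ \exists a'\in A,\ d(a',b)\le \varepsilon\}$. Borsuk's metric of continuity $\delta_d(X,Y)$ is the greatest lower bound of the numbers $t>0$ such that there exist $\kappa$-continuous maps $f:X\to Y$ and $g:Y\to X$ with $d(x,f(x))\le t$ for all $x\in X$ and $d(y,g(y))\le t$ for all $y\in Y$. *)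

From HB Require Import structures.
From mathcomp Require Import all_boot all_order all_algebra.
From mathcomp Require Import all_classical all_reals.
Set Implicit Arguments. Unset Strict Implicit. Unset Printing Implicit Defensive.
Import Order.TTheory GRing.Theory Num.Theory.
Local Open Scope classical_set_scope.
Local Open Scope ring_scope.

Definition zpoint (n : nat) := 'rV[int]_n.

Definition is_adjacency (T : Type) (k : T -> T -> bool) : Prop :=
  (forall x y, k x y = k y x) /\ (forall x, ~~ k x x).

Definition is_metric (R : realType) (T : Type) (d : T -> T -> R) : Prop :=
  [/\ forall x y, 0 <= d x y,
      forall x y, d x y = 0 <-> x = y,
      forall x y, d x y = d y x &
      forall x y z, d x z <= d x y + d y z].

(* (k,k)-continuity of f : X -> Y (f given as a total function on points that
   maps X into Y), in its adjacency form. *)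
Definition digitally_continuous (T : Type) (k : T -> T -> bool)
    (X Y : set T) (f : T -> T) : Prop :=
  (forall x, X x -> Y (f x)) /\
  (forall x x', X x -> X x' -> k x x' -> f x = f x' \/ k (f x) (f x')).

(* Hausdorff distance (the min of the admissible epsilons, taken as inf). *)
Definition hausdorff (R : realType) (T : Type) (d : T -> T -> R) (A B : set T) : R :=
  inf [set e : R | 0 <= e /\
        (forall a, A a -> exists2 b, B b & d a b <= e) /\
        (forall b, B b -> exists2 a, A a & d a b <= e)].

Definition borsuk_delta (R : realType) (T : Type) (k : T -> T -> bool)
    (d : T -> T -> R) (X Y : set T) : R :=
  inf [set t : R | 0 < t /\
        exists f g : T -> T,
          [/\ digitally_continuous k X Y f,
              digitally_continuous k Y X g,
              forall x, X x -> d x (f x) <= t &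
              forall y, Y y -> d y (g y) <= t]].

(* Every radius t realised by a pair of continuous maps f : X -> Y, g : Y -> X
   moving points by at most t is admissible for the Hausdorff distance: x is
   within t of f x in Y and y is within t of g y in X.  So H_d(X,Y) is a lower
   bound of the radii whose infimum is delta_d(X,Y); that this set of radii is
   nonempty comes from the constant maps, which move the points of the finite
   sets X and Y by a bounded amount. *)
From HB Require Import structures.
From mathcomp Require Import all_boot all_order all_algebra.
From mathcomp Require Import all_classical all_reals.
From mathcomp Require Import finmap.
Import Order.TTheory GRing.Theory Num.Theory.
Local Open Scope classical_set_scope.
Local Open Scope ring_scope.

Lemma finite_set_ubound {R : realType} {T : choiceType} (A : set T) (F : T -> R) :
  finite_set A -> exists M : R, forall a, A a -> F a <= M.
Proof.
move=> finA; exists (\big[Order.max/0]_(a <- fset_set A) F a) => a Aa.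
apply: (@le_bigmax_seq _ _ _ _ _ a xpredT F) => //.
by rewrite in_fset_set //; apply/mem_set.
Qed.

Section Distances.
Context {R : realType} {T : Type} (d : T -> T -> R).

Lemma hausdorff_le (A B : set T) (e : R) : 0 <= e ->
  (forall a, A a -> exists2 b, B b & d a b <= e) ->
  (forall b, B b -> exists2 a, A a & d a b <= e) ->
  hausdorff d A B <= e.
Proof.
move=> e0 nearB nearA; apply: ge_inf; last by split.
by exists 0 => ? [].
Qed.

Definition borsuk_radius (k : T -> T -> bool) (X Y : set T) (t : R) : Prop :=
  0 < t /\
  exists f g : T -> T,
    [/\ digitally_continuous k X Y f,
        digitally_continuous k Y X g,
        forall x, X x -> d x (f x) <= t &
        forall y, Y y -> d y (g y) <= t].

Lemma borsuk_deltaE (k : T -> T -> bool) (X Y : set T) :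
  borsuk_delta k d X Y = inf (borsuk_radius k X Y).
Proof. by []. Qed.

Lemma hausdorff_le_borsuk_radius (k : T -> T -> bool) (X Y : set T) (t : R) :
  (forall x y, d x y = d y x) -> borsuk_radius k X Y t -> hausdorff d X Y <= t.
Proof.
move=> dC [t_gt0 [f [g [[fXY _] [gYX _] df dg]]]].
apply: hausdorff_le; first exact: ltW.
- by move=> x Xx; exists (f x); [exact: fXY | exact: df].
- by move=> y Yy; exists (g y); [exact: gYX | rewrite dC; exact: dg].
Qed.

Lemma digitally_continuous_cst (k : T -> T -> bool) (X Y : set T) (y : T) :
  Y y -> digitally_continuous k X Y (fun=> y).
Proof. by move=> Yy; split=> // *; left. Qed.

End Distances.

Lemma borsuk_radius_exists (R : realType) (T : choiceType) (k : T -> T -> bool)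
    (d : T -> T -> R) (X Y : set T) :
  finite_set X -> finite_set Y -> X !=set0 -> Y !=set0 ->
  exists t, borsuk_radius d k X Y t.
Proof.
move=> finX finY [x0 Xx0] [y0 Yy0].
have [MX dX] := finite_set_ubound _ (fun x => d x y0) finX.
have [MY dY] := finite_set_ubound _ (fun y => d y x0) finY.
exists (Num.max 1 (Num.max MX MY)); split; first by rewrite lt_max ltr01.
exists (fun=> y0), (fun=> x0); split.
- exact: digitally_continuous_cst.
- exact: digitally_continuous_cst.
- by move=> x /dX /le_trans; apply; rewrite !le_max lexx orbT.
- by move=> y /dY /le_trans; apply; rewrite !le_max lexx !orbT.
Qed.

Theorem proposition2p6 (R : realType) (n : nat)
    (k : zpoint n -> zpoint n -> bool) (d : zpoint n -> zpoint n -> R)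
    (X Y : set (zpoint n)) :
  is_adjacency k -> is_metric d ->
  finite_set X -> finite_set Y -> X !=set0 -> Y !=set0 ->
  hausdorff d X Y <= borsuk_delta k d X Y.
Proof.
move=> _ [_ _ dC _] finX finY X0 Y0; rewrite borsuk_deltaE.
apply: lb_le_inf; first exact: borsuk_radius_exists.
by move=> t; apply: hausdorff_le_borsuk_radius.
Qed.
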